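(* Consider the system (S) below with all parameters $b_1,b_2,b_3,a_{11},a_{12},a_{13},a_{21},a_{23},a_{31},a_{32}>0$ and $c>0$, and assume $a_{31}b_1>a_{11}b_3$. Then $$E_2=\Big(x_2,0,z_2\Big),\qquad x_2=\frac{b_3}{a_{31}},\quad z_2=\frac{b_1-a_{11}x_2}{a_{13}}>0,$$ is an equilibrium of (S), and if $a_{31}b_2>a_{21}b_3$ then $E_2$ is locally asymptotically stable (all eigenvalues of the Jacobian matrix of (S) at $E_2$ have negative real parts).
   Context: Let $x,y,z\ge 0$ denote prey, intermediate predator and top predator densities. The system (S), an intraguild predation Lotka–Volterra model with top-predator feeding switching of intensity $c$, is $$\dot x=(b_1-a_{11}x)x-a_{12}xy-\frac{a_{13}x^2z}{x+cy},\qquad \dot y=-b_2y+a_{21}xy-\frac{a_{23}y^2z}{y+cx},\qquad \dot z=-b_3z+\frac{a_{31}x^2z}{x+cy}+\frac{a_{32}y^2z}{y+cx},$$ defined on the closed nonnegative orthant minus the origin (where $x+cy>0$ and $y+cx>0$), the right-hand side being smooth in a neighbourhood of every equilibrium with $x>0$. (The fractions are the switching terms $\frac{a_{13}xz}{1+cy/x}$ etc. written with cleared denominators.) *)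

From Stdlib Require Import Reals Lra.
Open Scope R_scope.

Record params := Params {
  b1 : R; b2 : R; b3 : R;
  a11 : R; a12 : R; a13 : R;
  a21 : R; a23 : R;
  a31 : R; a32 : R;
  sw : R (* switching intensity c *) }.

Definition fx (p : params) (x y z : R) : R :=
  (b1 p - a11 p * x) * x - a12 p * x * y - a13 p * x ^ 2 * z / (x + sw p * y).
Definition fy (p : params) (x y z : R) : R :=
  - b2 p * y + a21 p * x * y - a23 p * y ^ 2 * z / (y + sw p * x).
Definition fz (p : params) (x y z : R) : R :=
  - b3 p * z + a31 p * x ^ 2 * z / (x + sw p * y) + a32 p * y ^ 2 * z / (y + sw p * x).

Definition field (p : params) (i : nat) : R -> R -> R -> R :=
  match i with 0%nat => fx p | 1%nat => fy p | _ => fz p end.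

Definition upd (x y z : R) (j : nat) (t : R) : R * R * R :=
  match j with
  | 0%nat => (t, y, z) | 1%nat => (x, t, z) | _ => (x, y, t) end.

Definition coord (x y z : R) (j : nat) : R :=
  match j with 0%nat => x | 1%nat => y | _ => z end.

Definition partial_fun (p : params) (i j : nat) (x y z : R) : R -> R :=
  fun t => let '(u, v, w) := upd x y z j t in field p i u v w.

Definition is_jacobian (p : params) (x y z : R) (J : nat -> nat -> R) : Prop :=
  forall i j : nat, (i < 3)%nat -> (j < 3)%nat ->
    derivable_pt_lim (partial_fun p i j x y z) (coord x y z j) (J i j).

Definition is_equilibrium (p : params) (x y z : R) : Prop :=
  fx p x y z = 0 /\ fy p x y z = 0 /\ fz p x y z = 0.

(* Minimal complex arithmetic on pairs (re, im). *)
Definition Cx := (R * R)%type.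
Definition Cadd (u v : Cx) : Cx := (fst u + fst v, snd u + snd v).
Definition Csub (u v : Cx) : Cx := (fst u - fst v, snd u - snd v).
Definition Cmul (u v : Cx) : Cx :=
  (fst u * fst v - snd u * snd v, fst u * snd v + snd u * fst v).
Definition Cof (r : R) : Cx := (r, 0).

Definition det3C (M : nat -> nat -> Cx) : Cx :=
  Csub
   (Cadd (Cadd (Cmul (M 0%nat 0%nat) (Cmul (M 1%nat 1%nat) (M 2%nat 2%nat)))
               (Cmul (M 0%nat 1%nat) (Cmul (M 1%nat 2%nat) (M 2%nat 0%nat))))
         (Cmul (M 0%nat 2%nat) (Cmul (M 1%nat 0%nat) (M 2%nat 1%nat))))
   (Cadd (Cadd (Cmul (M 0%nat 2%nat) (Cmul (M 1%nat 1%nat) (M 2%nat 0%nat)))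
               (Cmul (M 0%nat 1%nat) (Cmul (M 1%nat 0%nat) (M 2%nat 2%nat))))
         (Cmul (M 0%nat 0%nat) (Cmul (M 1%nat 2%nat) (M 2%nat 1%nat)))).

Definition is_eigenvalue (J : nat -> nat -> R) (lam : Cx) : Prop :=
  det3C (fun i j => Csub (if Nat.eqb i j then lam else Cof 0) (Cof (J i j)))
  = Cof 0.

From Stdlib Require Import Reals Lra Psatz.
From Coquelicot Require Import Coquelicot.
Open Scope R_scope.

(* At E2 the y-row of the Jacobian is (0, a21 x2 - b2, 0), so the characteristic
   polynomial splits as (lam - (a21 x2 - b2)) (lam^2 + a11 x2 lam + a13 a31 x2 z2).
   The linear factor has a negative root because a31 b2 > a21 b3, and the
   quadratic one has positive coefficients, hence roots with negative real part. *)

Lemma Cmul_eq0 (u v : Cx) : Cmul u v = Cof 0 -> u = Cof 0 \/ v = Cof 0.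
Proof.
  destruct u as [a b], v as [c d]; unfold Cmul, Cof; simpl.
  intros E; injection E as Ere Eim.
  assert (Hn : (a ^ 2 + b ^ 2) * (c ^ 2 + d ^ 2) = 0) by nra.
  destruct (Rmult_integral _ _ Hn) as [Hu | Hv].
  - left; f_equal; nra.
  - right; f_equal; nra.
Qed.

Lemma quadratic_root_re_neg (s P : R) (lam : Cx) : 0 < s -> 0 < P ->
  Cadd (Cmul lam lam) (Cadd (Cmul (Cof s) lam) (Cof P)) = Cof 0 -> fst lam < 0.
Proof.
  destruct lam as [a b]; unfold Cadd, Cmul, Cof; simpl.
  intros Hs HP E; injection E as Ere Eim.
  (* Either lam is real, and a^2 + s a + P > 0 rules out a >= 0, or a = -s/2. *)
  assert (Hb : b * (2 * a + s) = 0) by lra.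
  destruct (Rmult_integral _ _ Hb) as [-> | Ha]; nra.
Qed.

Lemma eigenvalue_middle_row_diag (J : nat -> nat -> R) (lam : Cx) :
  J 1%nat 0%nat = 0 -> J 1%nat 2%nat = 0 -> is_eigenvalue J lam ->
  Cmul (Csub lam (Cof (J 1%nat 1%nat)))
    (Cadd (Cmul lam lam)
      (Cadd (Cmul (Cof (- (J 0%nat 0%nat + J 2%nat 2%nat))) lam)
        (Cof (J 0%nat 0%nat * J 2%nat 2%nat - J 0%nat 2%nat * J 2%nat 0%nat))))
  = Cof 0.
Proof.
  intros H10 H12; destruct lam as [a b].
  unfold is_eigenvalue, det3C, Csub, Cadd, Cmul, Cof; simpl.
  rewrite H10, H12; intros E; injection E as Ere Eim.
  f_equal; [etransitivity; [| exact Ere] | etransitivity; [| exact Eim]]; ring.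
Qed.

Lemma eigenvalue_re_neg_middle_row_diag (J : nat -> nat -> R) (lam : Cx) :
  J 1%nat 0%nat = 0 -> J 1%nat 2%nat = 0 -> J 1%nat 1%nat < 0 ->
  J 0%nat 0%nat + J 2%nat 2%nat < 0 ->
  0 < J 0%nat 0%nat * J 2%nat 2%nat - J 0%nat 2%nat * J 2%nat 0%nat ->
  is_eigenvalue J lam -> fst lam < 0.
Proof.
  intros H10 H12 Hd Htr Hdet Hev.
  destruct (Cmul_eq0 _ _ (eigenvalue_middle_row_diag J lam H10 H12 Hev))
    as [Hlin | Hquad].
  - destruct lam as [a b]; unfold Csub, Cof in Hlin; simpl in Hlin |- *.
    injection Hlin as Hre _; lra.
  - refine (quadratic_root_re_neg _ _ _ _ Hdet Hquad); lra.
Qed.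

Lemma jacobian_unique (p : params) (x y z : R) (J J' : nat -> nat -> R) :
  is_jacobian p x y z J -> is_jacobian p x y z J' ->
  forall i j, (i < 3)%nat -> (j < 3)%nat -> J i j = J' i j.
Proof.
  intros HJ HJ' i j Hi Hj.
  exact (uniqueness_limite _ _ _ _ (HJ i j Hi Hj) (HJ' i j Hi Hj)).
Qed.

Definition jacobian_y0 (p : params) (x z : R) (i j : nat) : R :=
  match i, j with
  | 0%nat, 0%nat => b1 p - 2 * a11 p * x - a13 p * z
  | 0%nat, 1%nat => - a12 p * x + a13 p * sw p * z
  | 0%nat, _ => - a13 p * x
  | 1%nat, 0%nat => 0
  | 1%nat, 1%nat => - b2 p + a21 p * x
  | 1%nat, _ => 0
  | _, 0%nat => a31 p * z
  | _, 1%nat => - a31 p * sw p * z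
  | _, _ => - b3 p + a31 p * x
  end.

Lemma is_jacobian_y0 (p : params) (x z : R) : 0 < x -> 0 < sw p ->
  is_jacobian p x 0 z (jacobian_y0 p x z).
Proof.
  intros Hx Hc i j Hi Hj.
  destruct i as [|[|[|i]]]; try lia; destruct j as [|[|[|j]]]; try lia;
  apply is_derive_Reals; unfold partial_fun; simpl; unfold fx, fy, fz;
  auto_derive; repeat split; try (intro; nra); field; nra.
Qed.

Lemma is_equilibrium_y0 (p : params) (x z : R) : 0 < x ->
  a31 p * x = b3 p -> a13 p * z = b1 p - a11 p * x -> is_equilibrium p x 0 z.
Proof.
  intros Hx Hxe Hze; unfold is_equilibrium, fx, fy, fz.
  replace (x + sw p * 0) with x by ring; repeat split.
  - replace (a13 p * x ^ 2 * z / x) with (x * (a13 p * z)) by (field; lra).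
    rewrite Hze; ring.
  - unfold Rdiv; ring.
  - replace (a31 p * x ^ 2 * z / x) with (z * (a31 p * x)) by (field; lra).
    rewrite Hxe; unfold Rdiv; ring.
Qed.

Theorem mainTheorem2 (p : params) :
  0 < b1 p -> 0 < b2 p -> 0 < b3 p -> 0 < a11 p -> 0 < a12 p -> 0 < a13 p ->
  0 < a21 p -> 0 < a23 p -> 0 < a31 p -> 0 < a32 p -> 0 < sw p ->
  a31 p * b1 p > a11 p * b3 p ->
  let x2 := b3 p / a31 p in
  let z2 := (b1 p - a11 p * x2) / a13 p in
  0 < z2 /\ is_equilibrium p x2 0 z2 /\
  (a31 p * b2 p > a21 p * b3 p ->
     (exists J, is_jacobian p x2 0 z2 J) /\
     forall J, is_jacobian p x2 0 z2 J ->
       forall lam, is_eigenvalue J lam -> fst lam < 0).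
Proof.
  intros Hb1 Hb2 Hb3 Ha11 _ Ha13 Ha21 _ Ha31 _ Hc Hb1b3 x2 z2.
  assert (Hx : 0 < x2) by (apply Rdiv_lt_0_compat; lra).
  assert (Hxe : a31 p * x2 = b3 p) by (unfold x2; field; lra).
  assert (Hze : a13 p * z2 = b1 p - a11 p * x2) by (unfold z2; field; lra).
  assert (Hz : 0 < z2).
  { assert (a31 p * (b1 p - a11 p * x2) = a31 p * b1 p - a11 p * b3 p)
      by (rewrite <- Hxe; ring).
    apply Rdiv_lt_0_compat; nra. }
  split; [exact Hz |]; split; [exact (is_equilibrium_y0 p x2 z2 Hx Hxe Hze) |].
  intros Hb2b3.
  pose proof (is_jacobian_y0 p x2 z2 Hx Hc) as HJ0.
  split; [exists (jacobian_y0 p x2 z2); exact HJ0 |].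
  intros J HJ lam.
  assert (Hd : - b2 p + a21 p * x2 < 0).
  { assert (a31 p * (- b2 p + a21 p * x2) = a21 p * b3 p - a31 p * b2 p)
      by (rewrite <- Hxe; ring).
    nra. }
  assert (Htr : 0 < a11 p * x2) by (apply Rmult_lt_0_compat; assumption).
  assert (Hdet : 0 < a13 p * x2 * (a31 p * z2)).
  { apply Rmult_lt_0_compat; apply Rmult_lt_0_compat; assumption. }
  apply eigenvalue_re_neg_middle_row_diag;
    rewrite ?(jacobian_unique _ _ _ _ _ _ HJ HJ0) by lia; simpl; try reflexivity.
  - exact Hd.
  - lra.
  - replace (- b3 p + a31 p * x2) with 0 by lra. lra.
Qed.
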